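(* Let $d\ge 0$ be an integer. Every triangle-free graph $G$ with $\mathrm{tww}(G)\le d$ admits a proper vertex coloring with at most $d+2$ colors.
   Context: A trigraph $H$ consists of a vertex set $V(H)$ and two disjoint sets of unordered pairs of distinct vertices: black edges $E(H)$ and red edges $R(H)$. Two vertices are adjacent (neighbors) if they are joined by a black or a red edge. The red graph of $H$ is the graph $(V(H),R(H))$; $H$ is a $d$-trigraph if its red graph has maximum degree at most $d$. A graph is a trigraph with no red edges. Contracting two distinct vertices $u,v$ of a trigraph $H$ yields the trigraph obtained by deleting $u$ and $v$ and adding a new vertex $z$ such that, for every other vertex $x$: $zx$ is a black edge if both $ux$ and $vx$ are black edges; $zx$ is not an edge if $x$ is adjacent to neither $u$ nor $v$; and $zx$ is a red edge otherwise. All edges not incident to $u$ or $v$ are unchanged. A $d$-sequence of an $n$-vertex graph $G$ is a sequence of $d$-trigraphs $G=G_n,G_{n-1},\dots,G_1$ such that $G_1$ has a single vertex and each $G_{i-1}$ is obtained from $G_i$ by one contraction (so $G_i$ has $i$ vertices). The twin-width $\mathrm{tww}(G)$ of $G$ is the minimum $d$ such that $G$ admits a $d$-sequence. *)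

From mathcomp Require Import all_boot.
Set Implicit Arguments. Unset Strict Implicit. Unset Printing Implicit Defensive.

(* A trigraph whose vertices are labelled by elements of a finite universe T.
   V(H) = tv H; black edges = tb H; red edges = tr H (only meaningful on V(H)). *)
Record trigraph (T : finType) := Trigraph {
  tv : {set T};
  tb : rel T;
  tr : rel T }.

Section Trigraphs.
Variable T : finType.

Definition tadj (H : trigraph T) : rel T := fun x y => tb H x y || tr H x y.

Definition trigraph_ok (H : trigraph T) : Prop :=
  [/\ forall x y, tadj H x y -> [/\ x \in tv H, y \in tv H & x != y],
      forall x y, tb H x y = tb H y x,
      forall x y, tr H x y = tr H y x &
      forall x y, ~~ (tb H x y && tr H x y)].

Definition dtrigraph (d : nat) (H : trigraph T) : Prop :=
  trigraph_ok H /\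
  forall x, x \in tv H -> #|[set y in tv H | tr H x y]| <= d.

(* H' is obtained from H by contracting the distinct vertices u, v of H into a
   new vertex z (z may reuse the label of u or v, but not of another vertex). *)
Definition contraction (H H' : trigraph T) : Prop :=
  exists u v z,
  [/\ u \in tv H, v \in tv H, u != v,
      z \notin tv H :\: [set u; v] &
      [/\ tv H' = z |: (tv H :\: [set u; v]),
          trigraph_ok H',
          (forall x y, x \in tv H' :\ z -> y \in tv H' :\ z ->
             tb H' x y = tb H x y /\ tr H' x y = tr H x y) &
          (forall x, x \in tv H' :\ z ->
             [/\ tb H' z x = (tb H u x && tb H v x),
                 (~~ tadj H' z x) = (~~ tadj H u x && ~~ tadj H v x) &
                 tr H' z x = (tadj H u x || tadj H v x) && ~~ (tb H u x && tb H v x)])]].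

Inductive dseq (d : nat) : trigraph T -> Prop :=
| dseq_end H : dtrigraph d H -> #|tv H| <= 1 -> dseq d H
| dseq_step H H' : dtrigraph d H -> contraction H H' -> dseq d H' -> dseq d H.

Definition simple_graph (e : rel T) : Prop :=
  (forall x y, e x y = e y x) /\ (forall x, ~~ e x x).

Definition graph_trigraph (e : rel T) : trigraph T :=
  Trigraph setT e (fun _ _ => false).

Definition tww_le (e : rel T) (d : nat) : Prop := dseq d (graph_trigraph e).

Definition triangle_free (e : rel T) : Prop :=
  forall x y z, ~ [&& e x y, e y z & e x z].

Definition proper_coloring (k : nat) (e : rel T) (c : T -> 'I_k) : Prop :=
  forall x y, e x y -> c x != c y.

End Trigraphs.

From mathcomp Require Import all_boot.
Set Implicit Arguments. Unset Strict Implicit. Unset Printing Implicit Defensive.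

(* Every trigraph H of a d-sequence of G is "realized" in G by the map rep
   sending each vertex of G to the vertex of H whose part contains it: edges of
   G join equal or adjacent parts, and black edges of H join parts completely.
   Contracting u, v into z yields the realization merge \o rep of the next
   trigraph (lemma realizes_contract).

   We prove, by induction along the d-sequence, that every vertex set W meeting
   each part in an independent set has a proper (d + 2)-coloring that is
   constant on parts (lemma dseq_part_colorable).  If W also meets the merged
   part of z independently, the coloring for the contracted trigraph is pulled
   back.  Otherwise some edge ab joins the parts of u and v inside W: we color
   W minus the part of u by induction, and give the part of u a color missing
   from z and its at most d red neighbours, which cover all neighbouring parts
   since a common black neighbour of u and v would close a triangle with ab
   (lemma part_colorable_extend).  The theorem is the case H = G, rep = id. *)

Lemma tadj_sym (T : finType) (H : trigraph T) :
  trigraph_ok H -> forall x y, tadj H x y = tadj H y x.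
Proof. by case=> _ bsym rsym _ x y; rewrite /tadj bsym rsym. Qed.

Lemma dseq_dtrigraph (T : finType) (d : nat) (H : trigraph T) :
  dseq d H -> dtrigraph d H.
Proof. by case. Qed.

Lemma fresh_color (n : nat) (F : {set 'I_n}) : #|F| < n -> exists k, k \notin F.
Proof.
move=> Fn; apply/existsP; apply: contraTT Fn => /existsPn allF.
rewrite -leqNgt -[n in n <= _]card_ord; apply: subset_leq_card.
by apply/subsetP => k _; apply/negbNE/allF.
Qed.

Section Coloring.
Variables (T : finType) (e : rel T) (d : nat).
Hypothesis e_sym : forall x y, e x y = e y x.
Hypothesis tf : triangle_free e.

Definition realizes (H : trigraph T) (rep : T -> T) : Prop :=
  [/\ forall a, rep a \in tv H,
      forall a b, e a b -> rep a != rep b -> tadj H (rep a) (rep b) &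
      forall a b, rep a != rep b -> tb H (rep a) (rep b) -> e a b].

Definition part_independent (rep : T -> T) (W : {set T}) : Prop :=
  forall a b, a \in W -> b \in W -> rep a = rep b -> ~~ e a b.

Definition part_colorable (rep : T -> T) (W : {set T}) : Prop :=
  exists col : T -> 'I_(d + 2),
    forall a b, a \in W -> b \in W -> e a b -> col (rep a) != col (rep b).

Lemma realizes_graph : realizes (graph_trigraph e) id.
Proof. by split=> [a|a b eab _|//]; rewrite /tadj /= ?inE ?eab. Qed.

Lemma part_colorable_comp (f rep : T -> T) (W : {set T}) :
  part_colorable (f \o rep) W -> part_colorable rep W.
Proof. by case=> col colP; exists (col \o f). Qed.

Section Contraction.
Variables (H H' : trigraph T) (u v z : T).
Hypotheses (okH : trigraph_ok H) (okH' : trigraph_ok H').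
Hypothesis zfresh : z \notin tv H :\: [set u; v].
Hypothesis tvH' : tv H' = z |: (tv H :\: [set u; v]).
Hypothesis kept_edges : forall x y, x \in tv H' :\ z -> y \in tv H' :\ z ->
  tb H' x y = tb H x y /\ tr H' x y = tr H x y.
Hypothesis merged_edges : forall x, x \in tv H' :\ z ->
  [/\ tb H' z x = (tb H u x && tb H v x),
      (~~ tadj H' z x) = (~~ tadj H u x && ~~ tadj H v x) &
      tr H' z x = (tadj H u x || tadj H v x) && ~~ (tb H u x && tb H v x)].

Definition merge (x : T) : T := if x \in [set u; v] then z else x.

Lemma kept_vertex x : x \in tv H -> x \notin [set u; v] -> x \in tv H' :\ z.
Proof.
move=> xH xuv; have xz : x != z.
  by apply: contraNneq zfresh => <-; rewrite in_setD xuv.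
by rewrite in_setD1 xz tvH' in_setU1 in_setD xuv xH orbT.
Qed.

Lemma merge_vertex x : x \in tv H -> merge x \in tv H'.
Proof.
rewrite /merge; case: ifP => [_ _|xuv xH]; first by rewrite tvH' setU11.
by have /setD1P[] := kept_vertex xH (negbT xuv).
Qed.

Lemma merge_collision x y : x \in tv H -> y \in tv H -> x != y ->
  merge x = merge y -> (x \in [set u; v]) && (y \in [set u; v]).
Proof.
move=> xH yH xy; rewrite /merge; case: ifP => xuv; case: ifP => yuv //.
- by move=> zy; have := kept_vertex yH (negbT yuv); rewrite -zy setD11.
- by move=> xz; have := kept_vertex xH (negbT xuv); rewrite xz setD11.
- by move=> exy; rewrite exy eqxx in xy.
Qed.

Lemma tadj_merged x : x \in tv H' :\ z -> tadj H' z x = tadj H u x || tadj H v x.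
Proof. by case/merged_edges=> _ E _; apply: negb_inj; rewrite E negb_or. Qed.

Lemma merge_adj x y : x \in tv H -> y \in tv H -> tadj H x y ->
  merge x != merge y -> tadj H' (merge x) (merge y).
Proof.
have to_z w t : w \in [set u; v] -> t \in tv H -> t \notin [set u; v] ->
    tadj H w t -> tadj H' z t.
  move=> wuv tH tuv wt; rewrite tadj_merged ?kept_vertex //.
  by case/set2P: wuv => <-; rewrite wt ?orbT.
move=> xH yH xy; rewrite /merge; case: ifP => xuv; case: ifP => yuv.
- by rewrite eqxx.
- by move=> _; apply: (to_z x) => //; rewrite yuv.
- by move=> _; rewrite tadj_sym //; apply: (to_z y); rewrite ?xuv // tadj_sym.
- move=> _; rewrite /tadj.
  by case: (kept_edges (kept_vertex xH (negbT xuv)) (kept_vertex yH (negbT yuv))) => -> ->.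
Qed.

Lemma merge_black x y : x \in tv H -> y \in tv H ->
  merge x != merge y -> tb H' (merge x) (merge y) -> tb H x y.
Proof.
have from_z w t : w \in [set u; v] -> t \in tv H -> t \notin [set u; v] ->
    tb H' z t -> tb H w t.
  move=> wuv tH tuv; have [-> _ _] := merged_edges (kept_vertex tH tuv).
  by case/set2P: wuv => -> /andP[] //.
have [[_ bsym _ _] [_ bsym' _ _]] := (okH, okH').
move=> xH yH; rewrite /merge; case: ifP => xuv; case: ifP => yuv.
- by rewrite eqxx.
- by move=> _; apply: (from_z x) => //; rewrite yuv.
- by move=> _; rewrite bsym' bsym; apply: (from_z y) => //; rewrite xuv.
- move=> _.
  by case: (kept_edges (kept_vertex xH (negbT xuv)) (kept_vertex yH (negbT yuv))) => ->.
Qed.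

Lemma merge_red y : y \in tv H -> y \notin [set u; v] ->
  tadj H u y -> ~~ (tb H u y && tb H v y) -> tr H' z y.
Proof.
move=> yH yuv uy nb; have [_ _ ->] := merged_edges (kept_vertex yH yuv).
by rewrite uy nb.
Qed.

Lemma realizes_contract rep : realizes H rep -> realizes H' (merge \o rep).
Proof.
case=> repH adj black; split=> [a|a b eab|a b] /=; first exact: merge_vertex.
- move=> neq; apply: merge_adj => //; apply: adj => //.
  by apply: contra_neq neq => ->.
- move=> neq /(merge_black (repH a) (repH b) neq) bab.
  by apply: black bab; apply: contra_neq neq => ->.
Qed.

Lemma part_independent_removal rep W : realizes H rep -> part_independent rep W ->
  part_independent (merge \o rep) [set g in W | rep g != u].
Proof.
case=> repH _ _ indep a b; rewrite !inE => /andP[aW au] /andP[bW bu] /= eqm.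
apply: indep => //; case: (eqVneq (rep a) (rep b)) => // neq.
case/andP: (merge_collision (repH a) (repH b) neq eqm).
by rewrite !inE (negbTE au) (negbTE bu) /= => /eqP -> /eqP ->.
Qed.

(* If an edge ab joins the parts of u and v inside W, the part of u can be
   colored last: neighbouring parts are v's or red neighbours of z in H', since
   a common black neighbour of u and v would close a triangle with ab. *)
Lemma part_colorable_extend rep W a b :
  realizes H rep -> part_independent rep W ->
  #|[set y in tv H' | tr H' z y]| <= d ->
  a \in W -> b \in W -> rep a = u -> rep b = v -> e a b ->
  part_colorable (merge \o rep) [set g in W | rep g != u] -> part_colorable rep W.
Proof.
move=> [repH adj black] indep redz aW bW au bv eab [col colP].
pose N := z |: [set y in tv H' | tr H' z y].
have nbr_in_N f g : rep f = u -> rep g != u -> e f g -> merge (rep g) \in N.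
  move=> fu gu efg; rewrite /N /merge; case: ifPn => [_|guv]; first exact: setU11.
  apply/setU1r; rewrite inE; have /setD1P[_ ->] := kept_vertex (repH g) guv.
  apply: merge_red => //; first by rewrite -fu adj // fu eq_sym.
  have gv : v != rep g by apply: contraNneq guv => <-; rewrite !inE eqxx orbT.
  apply/negP => /andP[ug vg]; apply: (tf (x := a) (y := b) (z := g)); rewrite eab.
  by rewrite (black b g) ?bv // (black a g) ?au // eq_sym.
have [k kF] : exists k, k \notin col @: N.
  apply: fresh_color; apply: leq_ltn_trans (leq_imset_card _ _) _.
  by rewrite addn2 ltnS cardsU1 -add1n leq_add ?leq_b1.
exists (fun x => if x == u then k else col (merge x)) => p q pW qW epq /=.
have inW' r : r \in W -> rep r != u -> r \in [set g in W | rep g != u].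
  by rewrite inE => ->.
case: (eqVneq (rep p) u) => pu; case: (eqVneq (rep q) u) => qu.
- by have := indep p q pW qW (etrans pu (esym qu)); rewrite epq.
- by apply: contraNneq kF => ->; apply: imset_f; apply: (nbr_in_N p).
- by apply: contraNneq kF => <-; apply: imset_f; apply: (nbr_in_N q); rewrite // e_sym.
- exact: colP (inW' _ pW pu) (inW' _ qW qu) epq.
Qed.

End Contraction.

Lemma dseq_part_colorable H : dseq d H ->
  forall rep W, realizes H rep -> part_independent rep W -> part_colorable rep W.
Proof.
elim=> {H} [H _ small|H H' [okH _] cHH' dH' IH] rep W realH indep.
  have k : 'I_(d + 2) by rewrite addn2; exact: ord0.
  case: realH => repH _ _; exists (fun=> k) => a b aW bW eab.
  have := indep a b aW bW (card_le1_eqP small _ _ (repH b) (repH a)).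
  by rewrite eab.
case: cHH' => u [v [z [_ _ _ zfresh [tvH' okH' kept merged]]]].
pose rep' := merge u v z \o rep.
have realH' : realizes H' rep' :=
  realizes_contract okH okH' zfresh tvH' kept merged realH.
have [_ redH'] := dseq_dtrigraph dH'.
have zH' : z \in tv H' by rewrite tvH' setU11.
case: (boolP [forall a, forall b,
    [&& a \in W, b \in W & rep' a == rep' b] ==> ~~ e a b]).
  move=> indep'; apply: part_colorable_comp (IH _ W realH' _) => a b aW bW eqm.
  by have /forallP/(_ b) := forallP indep' a; rewrite aW bW eqm eqxx.
case/forallPn=> a /forallPn[b]; rewrite negb_imply negbK.
case/andP=> /and3P[aW bW /eqP eqm] eab.
have extend a' b' : a' \in W -> b' \in W -> rep a' = u -> rep b' = v -> e a' b' ->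
    part_colorable rep W.
  move=> a'W b'W a'u b'v ea'b'.
  apply: (part_colorable_extend zfresh tvH' merged realH indep _ a'W b'W a'u b'v ea'b').
  - exact: redH' z zH'.
  - exact: IH realH' (part_independent_removal zfresh tvH' realH indep).
have neq : rep a != rep b by apply: contraL eab => /eqP; exact: indep.
have [repH _ _] := realH.
case/andP: (merge_collision zfresh tvH' (repH a) (repH b) neq eqm).
case/set2P=> au /set2P[] bv; rewrite ?au ?bv ?eqxx // in neq.
- exact: (extend a b).
- by apply: (extend b a); rewrite // e_sym.
Qed.

End Coloring.

Theorem mainTheorem9 (d : nat) (T : finType) (e : rel T) :
  simple_graph e -> triangle_free e -> tww_le e d ->
  exists c : T -> 'I_(d + 2), proper_coloring e c.
Proof.
move=> [e_sym irr] tf tww.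
have indep : part_independent e id setT by move=> a b _ _ /= ->; exact: irr.
have [col colP] := dseq_part_colorable e_sym tf tww (realizes_graph e) indep.
by exists col => a b eab; apply: colP; rewrite ?inE.
Qed.
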